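(* Let $\mathcal{S}^1$, $l\in K$, $\sigma\in\{+1,-1\}$ and the polyhedron $\mathcal{C}^l$ be as described in the context. Let $\bar{\pi}^l$ be an extreme point of $\mathcal{C}^l$ whose corresponding inequality is a non-trivial facet-defining inequality of $\mathrm{conv}(\mathcal{S}^1)$. Then $\bar{\pi}^l$ can be scaled in such a way that all of its components are $0$ or $1$.
   Context: Let $N=\{1,\dots,n\}$. Let $\Xi=\{x\in\mathbb{R}^n : Ex\ge f,\ 0\le x\le u\}$ be a network polytope of a directed network $G=(V,A)$ with arc set $A$ identified with $N$ ($x_i$ is the flow on arc $i$): the rows of $Ex\ge f$, indexed by a set $T$, are, for each node $v\in V$, the positive flow-balance inequality $\sum_{a\in\delta^+(v)}x_a-\sum_{a\in\delta^-(v)}x_a\ge f_v$ and the negative flow-balance inequality $-\sum_{a\in\delta^+(v)}x_a+\sum_{a\in\delta^-(v)}x_a\ge -f_v$ (here $\delta^+(v),\delta^-(v)$ are the sets of outgoing and incoming arcs of $v$); $u\in\mathbb{R}^n$ is the capacity vector. Let $\Delta_1=\{y_1\in\mathbb{R}: 0\le y_1\le 1\}$, $K=N$, and $\mathcal{S}^1=\{(x,y_1,z)\in\Xi\times\Delta_1\times\mathbb{R}^n : y_1x_k=z_k\ \forall k\in K\}$; for $k\in K$ let $A^k\in\mathbb{R}^{1\times n}$ be the unit row vector with $A^k_{1k}=1$, so the $k$-th bilinear constraint is $y_1A^kx=z_k$. Let $K_l=K\setminus\{l\}$. The vector $\pi^l=(\beta^+,\beta^-,\gamma^1,\theta,\eta^1,\rho^1,\lambda,\mu)$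 has $\beta^\pm\in\mathbb{R}^{K_l}_+$, $\gamma^1,\theta\in\mathbb{R}^T_+$, $\eta^1,\rho^1,\lambda,\mu\in\mathbb{R}^n_+$, and $\mathcal{C}^l=\{\pi^l\ge 0 : \sum_{k\in K_l}A^k_{1i}(\beta^+_k-\beta^-_k)+\sum_{t\in T}E_{ti}(\gamma^1_t-\theta_t)+\eta^1_i-\rho^1_i-\lambda_i+\mu_i=\sigma A^l_{1i}\ \ \forall i\in N\}$. The inequality corresponding to $\pi^l\in\mathcal{C}^l$ is the linear inequality obtained by summing: $(\beta^+_k-\beta^-_k)(y_1x_k-z_k)=0$ for $k\in K_l$; $\gamma^1_t\,y_1(E_{t\cdot}x-f_t)\ge0$ and $\theta_t(1-y_1)(E_{t\cdot}x-f_t)\ge 0$ for $t\in T$; $\eta^1_i\,y_1x_i\ge0$, $\rho^1_i\,y_1(u_i-x_i)\ge0$, $\lambda_i(1-y_1)x_i\ge0$, $\mu_i(1-y_1)(u_i-x_i)\ge0$ for $i\in N$; and the base equality $y_1x_l-z_l=0$ multiplied by $-\sigma$ (so that, by the defining equations of $\mathcal{C}^l$, all bilinear terms $y_1x_i$ cancel). A facet-defining inequality of $\mathrm{conv}(\mathcal{S}^1)$ is non-trivial if it is not implied by the linear constraints describing $\Xi$ and $\Delta_1$. *)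

From HB Require Import structures.
From mathcomp Require Import all_boot all_order all_algebra.
Set Implicit Arguments. Unset Strict Implicit. Unset Printing Implicit Defensive.
Import Order.TTheory GRing.Theory Num.Theory.
Local Open Scope ring_scope.

Section Network.
Variables (R : realFieldType) (V : finType) (n : nat).
Variables (tl hd : 'I_n -> V) (fv : V -> R) (u : 'I_n -> R).

(* Row index set T: for each node v, (v, true) = positive flow-balance row,
   (v, false) = negative flow-balance row. *)
Definition Tidx := (V * bool)%type.

(* coefficient of x_i in  sum_{a in delta^+(v)} x_a - sum_{a in delta^-(v)} x_a *)
Definition inc (v : V) (i : 'I_n) : R := (tl i == v)%:R - (hd i == v)%:R.

Definition Emat (t : Tidx) (i : 'I_n) : R :=
  if t.2 then inc t.1 i else - inc t.1 i.

Definition fvec (t : Tidx) : R := if t.2 then fv t.1 else - fv t.1.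

Definition Erow (t : Tidx) (x : 'I_n -> R) : R := \sum_(i < n) Emat t i * x i.

Definition in_Xi (x : 'I_n -> R) : Prop :=
  (forall t : Tidx, fvec t <= Erow t x) /\ (forall i, 0 <= x i /\ x i <= u i).

(* Points (x, y_1, z) of R^n x R x R^n, as functions on coordinates. *)
Definition coord := ('I_n + unit + 'I_n)%type.
Definition pt := coord -> R.
Definition px (p : pt) (i : 'I_n) : R := p (inl (inl i)).
Definition py (p : pt) : R := p (inl (inr tt)).
Definition pz (p : pt) (k : 'I_n) : R := p (inr k).

Definition Amat (k i : 'I_n) : R := (k == i)%:R.

Definition S1 (p : pt) : Prop :=
  in_Xi (px p) /\ (0 <= py p /\ py p <= 1) /\
  (forall k : 'I_n, py p * (\sum_(i < n) Amat k i * px p i) = pz p k).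

(* Index set of the components of pi^l = (beta+, beta-, gamma^1, theta, eta^1, rho^1, lambda, mu) *)
Definition Kl (l : 'I_n) := {k : 'I_n | k != l}.
Definition pidx (l : 'I_n) :=
  (Kl l + Kl l + Tidx + Tidx + 'I_n + 'I_n + 'I_n + 'I_n)%type.

Section Pi.
Variables (l : 'I_n) (pi : pidx l -> R).
Definition betap (k : Kl l) := pi (inl (inl (inl (inl (inl (inl (inl k))))))).
Definition betam (k : Kl l) := pi (inl (inl (inl (inl (inl (inl (inr k))))))).
Definition gamma1 (t : Tidx) := pi (inl (inl (inl (inl (inl (inr t)))))).
Definition theta (t : Tidx) := pi (inl (inl (inl (inl (inr t))))).
Definition eta1 (i : 'I_n) := pi (inl (inl (inl (inr i)))).
Definition rho1 (i : 'I_n) := pi (inl (inl (inr i))).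
Definition lambda (i : 'I_n) := pi (inl (inr i)).
Definition mu (i : 'I_n) := pi (inr i).
End Pi.

Definition in_C (l : 'I_n) (sigma : R) (pi : pidx l -> R) : Prop :=
  (forall j, 0 <= pi j) /\
  forall i : 'I_n,
    \sum_(k : Kl l) Amat (val k) i * (betap pi k - betam pi k)
    + \sum_(t : Tidx) Emat t i * (gamma1 pi t - theta pi t)
    + eta1 pi i - rho1 pi i - lambda pi i + mu pi i = sigma * Amat l i.

(* The left-hand side g of the inequality g(x,y_1,z) >= 0 corresponding to pi,
   written literally as the sum of the multiplied constraints. For pi in C^l
   the bilinear terms cancel and g is an affine function. *)
Definition ineq_lhs (l : 'I_n) (sigma : R) (pi : pidx l -> R) (p : pt) : R :=
  let x := px p in let y := py p in let z := pz p in
  \sum_(k : Kl l) (betap pi k - betam pi k) *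
      (y * (\sum_(i < n) Amat (val k) i * x i) - z (val k))
  + \sum_(t : Tidx) gamma1 pi t * (y * (Erow t x - fvec t))
  + \sum_(t : Tidx) theta pi t * ((1 - y) * (Erow t x - fvec t))
  + \sum_(i < n) (eta1 pi i * (y * x i) + rho1 pi i * (y * (u i - x i))
                  + lambda pi i * ((1 - y) * x i) + mu pi i * ((1 - y) * (u i - x i)))
  - sigma * (y * (\sum_(i < n) Amat l i * x i) - z l).

Definition conv (S : pt -> Prop) (p : pt) : Prop :=
  exists (k : nat) (q : 'I_k -> pt) (w : 'I_k -> R),
    (forall j, S (q j)) /\ (forall j, 0 <= w j) /\ \sum_(j < k) w j = 1 /\
    forall c, p c = \sum_(j < k) w j * q j c.

Definition aff_indep (k : nat) (q : 'I_k -> pt) : Prop :=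
  forall lam : 'I_k -> R,
    \sum_(j < k) lam j = 0 -> (forall c, \sum_(j < k) lam j * q j c = 0) ->
    forall j, lam j = 0.

Definition dim_ge (X : pt -> Prop) (d : nat) : Prop :=
  exists q : 'I_d.+1 -> pt, (forall j, X (q j)) /\ aff_indep q.

Definition dim_eq (X : pt -> Prop) (d : nat) : Prop :=
  dim_ge X d /\ ~ dim_ge X d.+1.

Definition facet_defining (P : pt -> Prop) (g : pt -> R) : Prop :=
  (forall p, P p -> 0 <= g p) /\
  exists d : nat, dim_eq P d.+1 /\ dim_eq (fun p => P p /\ g p = 0) d.

Definition implied_by_Xi_Delta (g : pt -> R) : Prop :=
  forall p : pt, in_Xi (px p) -> 0 <= py p -> py p <= 1 -> 0 <= g p.

Definition extreme_point (I : Type) (C : (I -> R) -> Prop) (v : I -> R) : Prop :=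
  C v /\
  forall (v1 v2 : I -> R) (t : R), C v1 -> C v2 -> 0 < t -> t < 1 ->
    (forall j, v j = t * v1 j + (1 - t) * v2 j) -> forall j, v1 j = v2 j.

End Network.

From HB Require Import structures.
From mathcomp Require Import all_boot all_order all_algebra.
From mathcomp Require Import ring lra.
Set Implicit Arguments. Unset Strict Implicit. Unset Printing Implicit Defensive.
Import Order.TTheory GRing.Theory Num.Theory.
Local Open Scope ring_scope.

(** The equations defining C^l only see the components of pi grouped into
   blocks: every component enters the equation of exactly one arc i or of
   exactly one node v, with coefficient +-1 there.  Writing r_i and p_v for the
   signed block sums, the equation of arc i reads
   r_i + p_(tail i) - p_(head i) = sigma [i = l].
   Extremality of pi rules out every nonzero perturbation supported on the
   support of pi that solves the homogeneous system.  Hence each block holds at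
   most one nonzero component, which is then +-(its block sum); and any f(p)
   with f(0) = 0 that is constant across the arcs of zero slack must vanish.
   Taking for f indicator functions shows that all nonzero potentials p_v
   share one value, which equals +-sigma, so every block sum is 0 or +-1 and
   the nonnegative components of pi are already 0 or 1. *)

Lemma divfK_supp (R : fieldType) (a b : R) : (b = 0 -> a = 0) -> a / b * b = a.
Proof. by have [-> /(_ erefl) -> | /divfK //] := eqVneq b 0; rewrite mulr0. Qed.

Section ExtremePointKernel.
Variables (R : realFieldType) (I J : finType).

Lemma exists_small_multiple_le (pi d : I -> R) :
  (forall x, 0 <= pi x) -> (forall x, pi x = 0 -> d x = 0) ->
  exists2 e, 0 < e & forall x, e * `|d x| <= pi x.
Proof.
move=> pi_ge0 supp_d; pose M := \sum_x `|d x| / pi x.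
have term_ge0 x : 0 <= `|d x| / pi x by rewrite divr_ge0.
have term_le x : `|d x| / pi x <= M.
  by rewrite /M (bigD1 x) //= lerDl sumr_ge0.
have M_ge0 : 0 <= M by rewrite sumr_ge0.
exists (1 + M)^-1 => [|x]; first by rewrite invr_gt0; lra.
have [/supp_d ->|pi_x] := eqVneq (pi x) 0; first by rewrite normr0 mulr0.
rewrite ler_pdivrMl; last lra.
have := term_le x; rewrite ler_pdivrMr ?lt0r ?pi_x ?pi_ge0 //.
have := pi_ge0 x; nra.
Qed.

Variables (A : (I -> R) -> J -> R) (b : J -> R).
Hypothesis A_linear :
  forall (p q : I -> R) (e : R) j, A (fun x => p x + e * q x) j = A p j + e * A q j.

Definition nonneg_solution (v : I -> R) : Prop :=
  (forall x, 0 <= v x) /\ forall j, A v j = b j.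

Lemma extreme_point_kernel pi : extreme_point nonneg_solution pi ->
  forall d, (forall x, pi x = 0 -> d x = 0) -> (forall j, A d j = 0) ->
  forall x, d x = 0.
Proof.
move=> [[pi_ge0 A_pi] pi_ext] d supp_d A_d.
have [e e_gt0 e_d] := exists_small_multiple_le pi_ge0 supp_d.
have perturbed e' : `|e'| = e -> nonneg_solution (fun x => pi x + e' * d x).
  move=> e'E; split=> [x|j]; last by rewrite A_linear A_d mulr0 addr0.
  have := ler_norm (- (e' * d x)); rewrite normrN normrM e'E.
  have := e_d x; lra.
have e_norm : `|e| = e by rewrite gtr0_norm.
have mid x : pi x = 2^-1 * (pi x + e * d x) + (1 - 2^-1) * (pi x + - e * d x).
  by field.
have half_gt0 : 0 < 2^-1 :> R by rewrite invr_gt0.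
have half_lt1 : 2^-1 < 1 :> R by rewrite invf_lt1 ?ltr1n.
move=> x; have := pi_ext _ _ _ (perturbed e e_norm) (perturbed (- e) _)
  half_gt0 half_lt1 mid x.
rewrite normrN => /(_ e_norm) opposite_eq.
have /eqP : e * d x = 0 by lra.
by rewrite mulf_eq0 (gt_eqF e_gt0) => /eqP.
Qed.

End ExtremePointKernel.

Definition pm1_or_0 (R : nzRingType) (x : R) : Prop := x = 0 \/ x = 1 \/ x = -1.

Section SlackPotential.
Variables (R : realFieldType) (V : finType) (n : nat) (tl hd : 'I_n -> V).
Variables (l : 'I_n) (sigma : R) (r : 'I_n -> R) (p : V -> R).
Hypothesis sigma_pm1 : sigma = 1 \/ sigma = -1.
Hypothesis balance : forall i, r i + p (tl i) - p (hd i) = sigma * (l == i)%:R.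
Hypothesis rigid : forall q : V -> R,
  (forall v, p v = 0 -> q v = 0) -> (forall i, r i = 0 -> q (tl i) = q (hd i)) ->
  forall v, q v = 0.

Lemma zero_slack_potential_eq i : i != l -> r i = 0 -> p (tl i) = p (hd i).
Proof.
move=> il ri0; have := balance i.
rewrite ri0 eq_sym (negbTE il) mulr0; lra.
Qed.

Lemma rigid_potential_comp (f : R -> R) : f 0 = 0 ->
  (r l = 0 -> f (p (tl l)) = f (p (hd l))) -> forall v, f (p v) = 0.
Proof.
move=> f0 f_l; apply: (rigid (q := f \o p)) => [v /= -> // | i ri0 /=].
have [il | il] := eqVneq i l; first by rewrite il in ri0 *; exact: f_l.
by rewrite (zero_slack_potential_eq il ri0).
Qed.

Lemma arc_l_separates (P : pred R) v : ~~ P 0 -> P (p v) ->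
  r l = 0 /\ P (p (tl l)) != P (p (hd l)).
Proof.
move=> nP0 Ppv.
have not_const : ~ (r l = 0 -> P (p (tl l)) = P (p (hd l))).
  move=> P_l; have f0 : (P 0)%:R = 0 :> R by rewrite (negbTE nP0).
  have /= := rigid_potential_comp (f := fun x => (P x)%:R) f0
    (fun rl0 => congr1 (fun b : bool => b%:R) (P_l rl0)) v.
  by rewrite Ppv => /eqP; rewrite oner_eq0.
have [rl0 | rl] := eqVneq (r l) 0; last by case: not_const => /eqP; rewrite (negbTE rl).
by split=> //; apply/negP => /eqP P_l; apply: not_const.
Qed.

Lemma potential_support v : p v != 0 ->
  [/\ r l = 0, p (tl l) * p (hd l) = 0 & p v = p (tl l) + p (hd l)].
Proof.
move=> pv.
have [rl0 sep_v] : r l = 0 /\ (p (tl l) == p v) != (p (hd l) == p v).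
  by apply: (arc_l_separates (P := pred1 (p v)) (v := v)); rewrite /= // eq_sym.
have [_ sep_0] : r l = 0 /\ (p (tl l) != 0) != (p (hd l) != 0).
  by apply: (arc_l_separates (P := fun x => x != 0) (v := v)); rewrite ?eqxx.
have ends0 : p (tl l) * p (hd l) = 0.
  apply/eqP; rewrite mulf_eq0; move: sep_0.
  by case: (p (tl l) == 0); case: (p (hd l) == 0).
split=> //; move/eqP: ends0 sep_v; rewrite mulf_eq0 => /orP[] /eqP ->;
  rewrite (eq_sym 0) (negbTE pv) ?(eq_sym false) eqbF_neg negbK => /eqP <-;
  by rewrite ?add0r ?addr0.
Qed.

Lemma potential_values :
  exists2 m : R, m = 1 \/ m = -1 & forall v, p v = 0 \/ p v = m.
Proof.
have [v0 /= pv0 | p0] := pickP (fun v => p v != 0); last first.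
  by exists 1 => [|v]; [left | left; apply/eqP/negbFE/p0].
have [rl0 ends0 _] := potential_support pv0.
have := balance l; rewrite rl0 eqxx mulr1 add0r => bal_l.
exists (p (tl l) + p (hd l)) => [|v].
  by move/eqP: ends0; rewrite mulf_eq0 => /orP[] /eqP ends0; case: sigma_pm1; lra.
have [-> | pv] := eqVneq (p v) 0; first by left.
by have [_ _ ->] := potential_support pv; right.
Qed.

Lemma slack_potential_pm1 : (forall i, pm1_or_0 (r i)) /\ (forall v, pm1_or_0 (p v)).
Proof.
have [m m_pm1 p_0m] := potential_values; rewrite /pm1_or_0.
split=> [i | v]; last by have := p_0m v; lra.
have [<- | il] := eqVneq l i; last first.
  by have := balance i; rewrite (negbTE il) mulr0; have := p_0m (tl i);
    have := p_0m (hd i); lra.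
have [-> | rl] := eqVneq (r l) 0; first by left.
have pt : p (tl l) = 0 by apply/eqP; apply: contraNT rl => /potential_support[->].
have ph : p (hd l) = 0 by apply/eqP; apply: contraNT rl => /potential_support[->].
by have := balance l; rewrite pt ph eqxx mulr1; case: sigma_pm1; lra.
Qed.

End SlackPotential.

Section Blocks.
Variables (R : realFieldType) (V : finType) (n : nat) (tl hd : 'I_n -> V) (l : 'I_n).

(* The column of component x in the system defining C^l is [sign x] times
   the unit vector of arc i if [block x = inl i], and [sign x] times the
   incidence row of node v if [block x = inr v]. *)
Definition block (x : pidx V l) : 'I_n + V :=
  match x with
  | inl (inl (inl (inl (inl (inl (inl k)))))) => inl (val k)
  | inl (inl (inl (inl (inl (inl (inr k)))))) => inl (val k)
  | inl (inl (inl (inl (inl (inr t))))) => inr t.1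
  | inl (inl (inl (inl (inr t)))) => inr t.1
  | inl (inl (inl (inr i))) => inl i
  | inl (inl (inr i)) => inl i
  | inl (inr i) => inl i
  | inr i => inl i
  end.

Definition row_sign (t : Tidx V) : R := if t.2 then 1 else -1.

Definition sign (x : pidx V l) : R :=
  match x with
  | inl (inl (inl (inl (inl (inl (inl _)))))) => 1
  | inl (inl (inl (inl (inl (inl (inr _)))))) => -1
  | inl (inl (inl (inl (inl (inr t))))) => row_sign t
  | inl (inl (inl (inl (inr t)))) => - row_sign t
  | inl (inl (inl (inr _))) => 1
  | inl (inl (inr _)) => -1
  | inl (inr _) => -1
  | inr _ => 1
  end.

Definition block_sum (d : pidx V l -> R) (g : 'I_n + V) : R :=
  \sum_(x | block x == g) sign x * d x.

Definition C_lhs (d : pidx V l -> R) (i : 'I_n) : R :=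
  \sum_(k : Kl l) Amat R (val k) i * (betap d k - betam d k)
  + \sum_(t : Tidx V) Emat R tl hd t i * (gamma1 d t - theta d t)
  + eta1 d i - rho1 d i - lambda d i + mu d i.

Lemma sign_pm1 x : sign x = 1 \/ sign x = -1.
Proof.
by case: x => [[[[[[[k|k]|[v []]]|[v []]]|i]|i]|i]|i]; rewrite /= ?opprK; auto.
Qed.

Lemma block_sum_arc d i : block_sum d (inl i) =
  \sum_(k : Kl l) Amat R (val k) i * (betap d k - betam d k)
  + eta1 d i - rho1 d i - lambda d i + mu d i.
Proof.
rewrite /block_sum !big_sumType /= -!sum_eqE /= !big_pred0_eq !big_pred1_eq.
have -> : \sum_(k : Kl l | val k == i) 1 * betap d k
    + \sum_(k : Kl l | val k == i) -1 * betam d k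
    = \sum_(k : Kl l) Amat R (val k) i * (betap d k - betam d k).
  rewrite -big_split big_mkcond; apply: eq_bigr => k _.
  by rewrite /Amat; case: (_ == _); rewrite /=; ring.
rewrite /eta1 /rho1 /lambda /mu; ring.
Qed.

Lemma block_sum_node d v : block_sum d (inr v) =
  \sum_(t : Tidx V | t.1 == v) row_sign t * (gamma1 d t - theta d t).
Proof.
rewrite /block_sum !big_sumType /= -!sum_eqE /= !big_pred0_eq.
rewrite !add0r !addr0 -big_split; apply: eq_bigr => t _.
by rewrite /= mulNr -mulrBr.
Qed.

Lemma C_lhs_block d i :
  C_lhs d i = block_sum d (inl i) + block_sum d (inr (tl i)) - block_sum d (inr (hd i)).
Proof.
rewrite block_sum_arc !block_sum_node /C_lhs.
have -> : \sum_(t : Tidx V) Emat R tl hd t i * (gamma1 d t - theta d t) =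
    \sum_(t : Tidx V | t.1 == tl i) row_sign t * (gamma1 d t - theta d t)
    - \sum_(t : Tidx V | t.1 == hd i) row_sign t * (gamma1 d t - theta d t).
  rewrite !(big_mkcond (fun t : Tidx V => t.1 == _)) -sumrB; apply: eq_bigr => t _.
  rewrite /Emat /inc /row_sign ![t.1 == _]eq_sym.
  by case: (t.2); case: (tl i == t.1); case: (hd i == t.1); rewrite /=; ring.
ring.
Qed.

Lemma block_sum_scale d (w : 'I_n + V -> R) g :
  block_sum (fun x => d x * w (block x)) g = w g * block_sum d g.
Proof. by rewrite /block_sum mulr_sumr; apply: eq_bigr => x /eqP ->; ring. Qed.

Lemma block_sum_delta y c g :
  block_sum (fun x => (x == y)%:R * c) g = (block y == g)%:R * (sign y * c).
Proof.
rewrite /block_sum; have [<- | yg] := eqVneq (block y) g.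
  rewrite (bigD1 y) //= eqxx mul1r big1 ?addr0 ?mul1r // => x /andP[_ /negbTE ->].
  by rewrite mul0r mulr0.
rewrite mul0r big1 // => x /eqP xg; have [xy | _] := eqVneq x y.
  by move: yg; rewrite -xy xg eqxx.
by rewrite mul0r mulr0.
Qed.

Lemma block_sum_linear d1 d2 e g :
  block_sum (fun x => d1 x + e * d2 x) g = block_sum d1 g + e * block_sum d2 g.
Proof. by rewrite /block_sum mulr_sumr -big_split; apply: eq_bigr => x _ /=; ring. Qed.

Lemma C_lhs_linear d1 d2 e i :
  C_lhs (fun x => d1 x + e * d2 x) i = C_lhs d1 i + e * C_lhs d2 i.
Proof. by rewrite !C_lhs_block !block_sum_linear; ring. Qed.

Lemma sign_neq0 x : sign x != 0.
Proof. by case: (sign_pm1 x) => ->; rewrite ?oppr_eq0 oner_eq0. Qed.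

Section ExtremePoint.
Variables (sigma : R) (pi : pidx V l -> R).
Hypothesis pi_ext : extreme_point (in_C tl hd sigma) pi.

Lemma C_kernel d : (forall x, pi x = 0 -> d x = 0) -> (forall i, C_lhs d i = 0) ->
  forall x, d x = 0.
Proof.
exact: (extreme_point_kernel (b := fun i => sigma * Amat R l i) C_lhs_linear pi_ext).
Qed.

Lemma block_at_most_one x y : x != y -> block x = block y -> pi x = 0 \/ pi y = 0.
Proof.
move=> xy same_block; have [-> | px] := eqVneq (pi x) 0; [by left | right].
apply/eqP; apply: contraT => py.
pose d z := (z == x)%:R * sign y + (-1) * ((z == y)%:R * sign x).
have d_supp z : pi z = 0 -> d z = 0.
  move=> pz; have zx : (z == x) = false by apply: contraNF px => /eqP <-; apply/eqP.
  have zy : (z == y) = false by apply: contraNF py => /eqP <-; apply/eqP.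
  by rewrite /d zx zy !mul0r mulr0 addr0.
have d_block g : block_sum d g = 0.
  by rewrite block_sum_linear !block_sum_delta same_block; ring.
have d_ker i : C_lhs d i = 0 by rewrite C_lhs_block !d_block subr0 addr0.
have := C_kernel d_supp d_ker x; rewrite /d eqxx (negbTE xy) mul1r mul0r mulr0 addr0.
by move/eqP; rewrite (negbTE (sign_neq0 y)).
Qed.

Lemma pi_block_sum x : pi x != 0 -> pi x = sign x * block_sum pi (block x).
Proof.
move=> px; rewrite /block_sum (bigD1 x) //= big1 ?addr0 => [|y /andP[/eqP same yx]].
  by case: (sign_pm1 x) => ->; ring.
case: (block_at_most_one yx same) => [-> | px0]; first by rewrite mulr0.
by rewrite px0 eqxx in px.
Qed.

Lemma block_support g : block_sum pi g != 0 -> exists2 x, block x = g & pi x != 0.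
Proof.
move=> Sg.
have [x /andP[/eqP bx px] | none] := pickP (fun x => (block x == g) && (pi x != 0)).
  by exists x.
move/eqP: Sg; case; rewrite /block_sum big1 // => x bx.
by move: (none x); rewrite bx /= => /negbFE /eqP ->; rewrite mulr0.
Qed.

Lemma block_sum_balance i :
  block_sum pi (inl i) + block_sum pi (inr (tl i)) - block_sum pi (inr (hd i))
  = sigma * (l == i)%:R.
Proof. by rewrite -C_lhs_block; case: pi_ext => [[_ C_pi] _]; apply: C_pi. Qed.

Lemma block_sum_rigid (q : V -> R) :
  (forall v, block_sum pi (inr v) = 0 -> q v = 0) ->
  (forall i, block_sum pi (inl i) = 0 -> q (tl i) = q (hd i)) ->
  forall v, q v = 0.
Proof.
move=> q_supp q_tight v.
pose w g := match g with
  | inl j => (q (hd j) - q (tl j)) / block_sum pi (inl j)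
  | inr z => q z / block_sum pi (inr z)
  end.
(* w is chosen so that [d] has block sums [w g * block_sum pi g] whose arc
   equations cancel. *)
pose d x := pi x * w (block x).
have d_supp x : pi x = 0 -> d x = 0 by move=> px; rewrite /d px mul0r.
have d_ker i : C_lhs d i = 0.
  have node z : q z / block_sum pi (inr z) * block_sum pi (inr z) = q z.
    exact/divfK_supp/q_supp.
  have arc : (q (hd i) - q (tl i)) / block_sum pi (inl i) * block_sum pi (inl i)
      = q (hd i) - q (tl i).
    by apply: divfK_supp => /q_tight ->; rewrite subrr.
  by rewrite C_lhs_block !block_sum_scale /w /= !node arc; ring.
have [Sv0 | Sv] := eqVneq (block_sum pi (inr v)) 0; first exact: q_supp.
have [x bx px] := block_support Sv.
have /eqP := C_kernel d_supp d_ker x; rewrite /d bx /= mulf_eq0 (negbTE px) /=.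
by rewrite mulf_eq0 invr_eq0 (negbTE Sv) orbF => /eqP.
Qed.

End ExtremePoint.

End Blocks.

Theorem proposition1 (R : realFieldType) (V : finType) (n : nat)
    (tl hd : 'I_n -> V) (fv : V -> R) (u : 'I_n -> R)
    (l : 'I_n) (sigma : R) (pibar : pidx V l -> R) :
  (forall a : 'I_n, tl a != hd a) ->
  (sigma = 1 \/ sigma = -1) ->
  extreme_point (in_C tl hd sigma) pibar ->
  facet_defining (conv (S1 tl hd fv u)) (ineq_lhs tl hd fv u sigma pibar) ->
  ~ implied_by_Xi_Delta tl hd fv u (ineq_lhs tl hd fv u sigma pibar) ->
  exists c : R, 0 < c /\ forall j : pidx V l, c * pibar j = 0 \/ c * pibar j = 1.
Proof.
move=> _ sigma_pm1 pi_ext _ _; exists 1; split=> [|x]; first exact: ltr01.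
rewrite mul1r; have [-> | px] := eqVneq (pibar x) 0; [by left | right].
have [r_pm1 p_pm1] := slack_potential_pm1 (r := fun i => block_sum pibar (inl i))
  (p := fun v => block_sum pibar (inr v)) sigma_pm1
  (block_sum_balance pi_ext) (block_sum_rigid pi_ext).
have S_pm1 g : pm1_or_0 (block_sum pibar g) by case: g.
have [[pi_ge0 _] _] := pi_ext; have := pi_ge0 x.
have := pi_block_sum pi_ext px.
by case: (sign_pm1 R x) => ->; case: (S_pm1 (block x)) => [|[]] ->; lra.
Qed.
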